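(* Let $\ell,r$ be integers with $r\ge 2$ and $\ell\ge 2r$, and let $m=m_{r,\ell}$. Define $H(q)=(m-q)\,(q)_{r-1}$ for integers $q\in[0,m]$. Then $H(q)<H(m-1)$ for all integers $q\in[0,m]\setminus\{m-1\}$.
   Context: For an integer $z$ and positive integer $k$, $(z)_k=z(z-1)\cdots(z-k+1)$ if $z>k-1$ and $(z)_k=0$ otherwise. $m_{r,\ell}$ is the unique integer $k\ge r$ maximizing $f(k)=\frac{(k-1)(k-2)\cdots(k-r+1)}{k^{\ell-1}}$ over all integers $k\ge r$. *)

From mathcomp Require Import all_boot all_order all_algebra.
Set Implicit Arguments. Unset Strict Implicit. Unset Printing Implicit Defensive.
Import Order.TTheory GRing.Theory Num.Theory.

Definition falling (z k : nat) : nat := z ^_ k.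

Definition fmax (r l k : nat) : rat :=
  ((\prod_(1 <= i < r) ((k%:R : rat) - i%:R)) / (k%:R ^+ (l.-1)))%R.

(* m is the unique integer k >= r maximizing f over all integers k >= r,
   i.e. m = m_{r,l}. *)
Definition is_m (r l m : nat) : Prop :=
  (r <= m)%N /\ forall k : nat, (r <= k)%N -> k <> m -> (fmax r l k < fmax r l m)%R.

Definition Hfun (r m q : nat) : nat := (m - q) * falling q (r.-1).

(* H(q) = (m-q)(q)_(r-1) vanishes outside [r-1, m-1], and for q in that range
   H(q+1) > H(q) exactly when m+1 < r(m-q); so H increases on [r-1, m-1] as soon
   as m <= 2r-2.  This bound on m holds because
   f(k+1)/f(k) = k/(k-r+1) * (k/(k+1))^(l-1), which Bernoulli's inequality
   (1+1/k)^n >= 1+n/k makes < 1 once k >= 2r-2 and l >= 2r: f would be larger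
   at m-1 than at m if m >= 2r-1. *)

From mathcomp Require Import all_boot all_order all_algebra.
From mathcomp Require Import zify ring.
Set Implicit Arguments.
Unset Strict Implicit.
Unset Printing Implicit Defensive.

Import Order.TTheory GRing.Theory Num.Theory.

Lemma bernoulli_leq (k n : nat) : k ^ n * (k + n) <= k * k.+1 ^ n.
Proof.
elim: n => [|n IHn]; first by rewrite !expn0 mul1n muln1 addn0.
rewrite !expnS; nia.
Qed.

Lemma expn_lt_subn_mul_expSn (r k n : nat) :
  1 < r -> (2 * r).-2 <= k -> (2 * r).-1 <= n ->
  k * k ^ n < (k - r.-1) * k.+1 ^ n.
Proof.
move=> r_gt1 k_ge n_ge.
have kn_gt0 : 0 < k ^ n by rewrite expn_gt0; apply/orP; left; lia.
have gain : k * k < (k - r.-1) * (k + n) by nia.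
have := bernoulli_leq k n.
nia.
Qed.

(* Both sides are x (x-1) ... (x-r). *)
Lemma prod_subn_shift (R : comRingType) (x : R) (r : nat) :
  ((\prod_(1 <= i < r.+1) (x + 1 - i%:R)) * (x - r%:R) =
   x * \prod_(1 <= i < r.+1) (x - i%:R))%R.
Proof.
rewrite big_add1 /= (eq_bigr (fun i => x - i%:R)%R); last first.
  by move=> i _; rewrite -natr1 opprD addrACA subrr addr0.
by rewrite -(big_nat_recr _ _ _ (leq0n r)) big_nat_recl // subr0 big_add1.
Qed.

Lemma fmax_succ_lt (r l k : nat) :
  k * k ^ l.-1 < (k - r) * k.+1 ^ l.-1 -> (fmax r.+1 l k.+1 < fmax r.+1 l k)%R.
Proof.
set n := l.-1 => ineq.
have r_lt_k : r < k.
  by rewrite -subn_gt0 lt0n; apply: contraTneq ineq => ->; rewrite mul0n ltn0.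
have shift := prod_subn_shift (k%:R : rat) r.
rewrite /fmax -/n -natr1 in shift *.
set N' := (\prod_(1 <= i < r.+1) _)%R in shift *.
set N := (\prod_(1 <= i < r.+1) _)%R in shift *.
have N_gt0 : (0 < N)%R.
  rewrite /N big_nat_cond; apply: prodr_gt0 => i /andP [/andP [_ lt_ir] _].
  by rewrite subr_gt0 ltr_nat (leq_trans lt_ir).
have k_gt0 : (0 < k%:R :> rat)%R by rewrite ltr0n (leq_ltn_trans _ r_lt_k).
have kr_gt0 : (0 < (k - r)%:R :> rat)%R by rewrite ltr0n subn_gt0.
have kn_gt0 : (0 < k%:R ^+ n :> rat)%R by rewrite exprn_gt0.
have kSn_gt0 : (0 < (k%:R + 1) ^+ n :> rat)%R by rewrite exprn_gt0 ?addr_gt0.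
rewrite ltr_pdivrMr // mulrAC ltr_pdivlMr //.
rewrite -(ltr_pM2r kr_gt0).
have -> : (N' * k%:R ^+ n * (k - r)%:R = N * (k * k ^ n)%:R)%R.
  by rewrite mulrAC natrB 1?ltnW // shift natrM natrX; ring.
have -> : (N * (k%:R + 1) ^+ n * (k - r)%:R = N * ((k - r) * k.+1 ^ n)%:R)%R.
  by rewrite natrM natrX -natr1; ring.
by rewrite ltr_pM2l // ltr_nat.
Qed.

Lemma is_m_le (r l m : nat) : 1 < r -> 2 * r <= l -> is_m r l m -> m <= (2 * r).-2.
Proof.
move=> r_gt1 l_ge [r_le_m m_max]; rewrite leqNgt; apply/negP => m_gt.
have m_gt0 : 0 < m by lia.
have decr : (fmax r l m < fmax r l m.-1)%R.
  rewrite -{1}(prednK m_gt0) -(prednK (ltnW r_gt1)); apply: fmax_succ_lt.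
  by apply: expn_lt_subn_mul_expSn; lia.
have r_le_pred : r <= m.-1 by lia.
have pred_neq : m.-1 <> m by lia.
have incr := m_max _ r_le_pred pred_neq.
by have := lt_trans decr incr; rewrite ltxx.
Qed.

Lemma Hfun_gt0 (r m q : nat) : (0 < Hfun r m q) = (r.-1 <= q < m).
Proof. by rewrite /Hfun /falling muln_gt0 subn_gt0 ffact_gt0 andbC. Qed.

Lemma Hfun_lt_succ (r m q : nat) :
  1 < r -> r.-1 <= q -> m.+1 < r * (m - q) -> Hfun r m q < Hfun r m q.+1.
Proof.
move=> r_gt1 q_ge gap; rewrite /Hfun /falling.
have -> : r.-1 = r.-2.+1 by lia.
rewrite ffactnSr ffactnS /=.
have a_gt0 : 0 < q ^_ r.-2 by rewrite ffact_gt0; lia.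
rewrite mulnCA [in X in _ < X]mulnA [in X in _ < X]mulnC ltn_pmul2l //.
nia.
Qed.

Lemma Hfun_increasing (r m : nat) : 1 < r -> m <= (2 * r).-2 ->
  {in [pred q | r.-1 <= q <= m.-1] &, {homo Hfun r m : p q / p < q}}.
Proof.
move=> r_gt1 m_le; apply: homo_ltn_in.
- exact: ltn_trans.
- by move=> p q p_in q_in k; rewrite !inE in p_in q_in *; lia.
- move=> q q_in qS_in; rewrite !inE in q_in qS_in.
  apply: Hfun_lt_succ => //; first by lia.
  have two_le : 2 <= m - q by lia.
  have := leq_mul (leqnn r) two_le.
  lia.
Qed.

Theorem lemma4p4 (r l m : nat) :
  (2 <= r)%N -> (2 * r <= l)%N -> is_m r l m ->
  forall q : nat, (q <= m)%N -> q <> m.-1 -> (Hfun r m q < Hfun r m m.-1)%N.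
Proof.
move=> r_gt1 l_ge m_is q q_le q_neq.
have m_le := is_m_le r_gt1 l_ge m_is.
have r_le_m : r <= m by case: m_is.
have [q_in | q_out] := boolP (r.-1 <= q < m).
  by apply: (Hfun_increasing r_gt1 m_le); rewrite ?inE; lia.
have -> : Hfun r m q = 0 by apply/eqP; rewrite -leqn0 leqNgt Hfun_gt0.
by rewrite Hfun_gt0; lia.
Qed.
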